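(* Let $\mathcal{A}$ be a finite alphabet and let $P$, $Q$, $R$ be probability mass functions on $\mathcal{A}$. Let $p_{\min}=\min_{a\in\mathcal{A}}P(a)$, $p_{\max}=\max_{a\in\mathcal{A}}P(a)$, $r_{\min}=\min_{a\in\mathcal{A}}R(a)$, $r_{\max}=\max_{a\in\mathcal{A}}R(a)$, and $d_1=\sum_{a\in\mathcal{A}}|P(a)-Q(a)|$. If $d_1<2p_{\min}$, then \[ D(Q\|R)-D(P\|R)\le \frac{d_1}{2}\log_2\!\left(\frac{p_{\max}+d_1/2}{p_{\min}-d_1/2}\cdot\frac{r_{\max}}{r_{\min}}\right). \]
   Context: $D(P\|R)=\sum_{a: P(a)>0}P(a)\log_2\frac{P(a)}{R(a)}$ is the informational divergence (Kullback–Leibler divergence in bits). *)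

From mathcomp Require Import all_boot all_order all_algebra.
From mathcomp Require Import all_classical all_reals all_analysis.
Set Implicit Arguments. Unset Strict Implicit. Unset Printing Implicit Defensive.
Import Order.TTheory GRing.Theory Num.Theory.
Local Open Scope ring_scope.

Section Defs.
Context {R : realType} {A : finType}.

Definition is_pmf (P : A -> R) : Prop :=
  (forall a, 0 <= P a) /\ \sum_(a : A) P a = 1.

Definition log2 (x : R) : R := ln x / ln 2.

Definition divergence (P Q : A -> R) : R :=
  \sum_(a : A | 0 < P a) P a * log2 (P a / Q a).

Definition fmin (f : A -> R) : R :=
  if [pick a : A] is Some a0 then \big[Num.min/f a0]_(a : A) f a else 0.
Definition fmax (f : A -> R) : R :=
  if [pick a : A] is Some a0 then \big[Num.max/f a0]_(a : A) f a else 0.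

Definition dist1 (P Q : A -> R) : R := \sum_(a : A) `|P a - Q a|.

End Defs.

(** By convexity of [x ln x], [D(Q||S) - D(P||S)] is at most
    [sum_a (Q a - P a) * ln (Q a / S a)] nats, the first-order term [sum_a (Q a - P a)]
    vanishing.  A sum [sum_a D a * g a] with [sum_a D a = 0] is at most half of
    [sum_a |D a|] times the oscillation of [g].  Finally [|Q a - P a| <= d1 / 2], so
    [ln (Q a / S a)] ranges over an interval of length
    [ln ((p_max + d1/2) / (p_min - d1/2) * (r_max / r_min))]. *)

From mathcomp Require Import all_boot all_order all_algebra.
From mathcomp Require Import all_classical all_reals all_analysis.
From mathcomp Require Import ring lra.
Import Order.TTheory GRing.Theory Num.Theory.
Local Open Scope ring_scope.

Section Divergence.
Context {R : realType} {A : finType}.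
Implicit Types (f P Q S D g : A -> R).

Lemma fmin_le f a : fmin f <= f a.
Proof.
rewrite /fmin; case: pickP => [a0 _|/(_ a)//].
by rewrite (bigD1 a) //= ge_min lexx.
Qed.

Lemma fmax_ge f a : f a <= fmax f.
Proof.
rewrite /fmax; case: pickP => [a0 _|/(_ a)//].
by rewrite (bigD1 a) //= le_max lexx.
Qed.

Lemma fmin_gt0 f (a0 : A) : (forall a, 0 < f a) -> 0 < fmin f.
Proof.
move=> f_gt0; rewrite /fmin; case: pickP => [a1 _|/(_ a0)//].
by elim/big_ind: _ => //= x y x_gt0 y_gt0; rewrite lt_min x_gt0.
Qed.

Lemma ln_le_subr1 (x : R) : 0 < x -> ln x <= x - 1.
Proof.
move=> x_gt0; have := @le_ln1Dx R (x - 1).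
by rewrite addrCA subrr addr0; apply; lra.
Qed.

Lemma ler_ln_div (x1 x2 y1 y2 : R) : 0 < x1 -> 0 < y2 ->
  x1 <= x2 -> y2 <= y1 -> ln (x1 / y1) <= ln (x2 / y2).
Proof.
move=> x1_gt0 y2_gt0 le_x12 le_y21.
have x2_gt0 := lt_le_trans x1_gt0 le_x12; have y1_gt0 := lt_le_trans y2_gt0 le_y21.
rewrite ler_ln ?posrE ?divr_gt0 //.
by rewrite ler_pM ?lef_pV2 ?posrE ?invr_ge0 // ltW.
Qed.

Lemma xlnx_sub_le {p q : R} : 0 < p -> 0 < q ->
  q * ln q - p * ln p <= (q - p) * (1 + ln q).
Proof.
move=> p_gt0 q_gt0.
have := ler_wpM2l (ltW p_gt0) (ln_le_subr1 _ (divr_gt0 q_gt0 p_gt0)).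
rewrite ln_div ?posrE // !mulrBr mulr1 mulrCA divff ?gt_eqF // mulr1.
nra.
Qed.

Lemma divergence_ln P S : (forall a, 0 < P a) ->
  divergence P S = (\sum_a P a * ln (P a / S a)) / ln 2.
Proof.
move=> P_gt0; rewrite /divergence mulr_suml.
rewrite (eq_bigl xpredT) => [|a]; last by rewrite P_gt0.
by apply: eq_bigr => a _; rewrite /log2 mulrA.
Qed.

Lemma divergence_sub_le {P Q S} :
  (forall a, 0 < P a) -> (forall a, 0 < Q a) -> (forall a, 0 < S a) ->
  \sum_a P a = \sum_a Q a ->
  divergence Q S - divergence P S <= (\sum_a (Q a - P a) * ln (Q a / S a)) / ln 2.
Proof.
move=> P_gt0 Q_gt0 S_gt0 sPQ.
rewrite !divergence_ln // -mulrBl ler_pM2r ?invr_gt0 ?ln_gt0 ?ltr1n // -sumrB.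
have -> : \sum_a (Q a - P a) * ln (Q a / S a)
        = \sum_a (Q a - P a) * (1 + ln (Q a / S a)).
  under [RHS]eq_bigr do rewrite mulrDr mulr1.
  by rewrite big_split /= sumrB sPQ subrr add0r.
apply: ler_sum => a _; rewrite !ln_div ?posrE //.
have := xlnx_sub_le (P_gt0 a) (Q_gt0 a); nra.
Qed.

Lemma zero_sum_mul_le {D g} {L U : R} :
  \sum_a D a = 0 -> (forall a, L <= g a <= U) ->
  \sum_a D a * g a <= (\sum_a `|D a|) / 2 * (U - L).
Proof.
move=> D0 gLU.
have -> : \sum_a D a * g a = \sum_a D a * (g a - L).
  under [RHS]eq_bigr do rewrite mulrBr.
  by rewrite sumrB -mulr_suml D0 mul0r subr0.
(* only the positive part of [D] contributes, and its mass is half of [sum_a |D a|] *)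
have -> : (\sum_a `|D a|) / 2 = \sum_a (`|D a| + D a) / 2.
  by rewrite -mulr_suml big_split /= D0 addr0.
rewrite mulr_suml; apply: ler_sum => a _.
have := gLU a; have := ler_norm (D a); have := lerNnormlW (lexx `|D a|); nra.
Qed.

Lemma norm_sub_le_half_dist1 P Q a :
  \sum_b P b = \sum_b Q b -> `|Q a - P a| <= dist1 P Q / 2.
Proof.
move=> sPQ.
have : \sum_b (Q b - P b) = 0 by rewrite sumrB sPQ subrr.
rewrite (bigD1 a) //= => /eqP; rewrite addr_eq0 => /eqP Da.
have : `|Q a - P a| <= \sum_(b | b != a) `|P b - Q b|.
  rewrite Da normrN; apply: le_trans (ler_norm_sum _ _ _) _.
  by apply: ler_sum => b _; rewrite distrC.
rewrite /dist1 [X in _ <= X / 2](bigD1 a) //= distrC; lra.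
Qed.

Lemma fmin_fmax_dist1_bounds P Q a : \sum_b P b = \sum_b Q b ->
  fmin P - dist1 P Q / 2 <= Q a <= fmax P + dist1 P Q / 2.
Proof.
move=> /(norm_sub_le_half_dist1 P Q a); rewrite ler_norml => /andP[].
have := fmin_le P a; have := fmax_ge P a; lra.
Qed.

End Divergence.

Theorem lemma1 (R : realType) (A : finType) (P Q Rd : A -> R)
  (hP : is_pmf P) (hQ : is_pmf Q) (hR : is_pmf Rd)
  (hRpos : forall a, 0 < Rd a)
  (hd : dist1 P Q < 2 * fmin P) :
  divergence Q Rd - divergence P Rd <=
  dist1 P Q / 2 *
    log2 ((fmax P + dist1 P Q / 2) / (fmin P - dist1 P Q / 2)
          * (fmax Rd / fmin Rd)).
Proof.
case: hP => _ sP1; case: hQ => _ sQ1.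
have [a0 _|A_empty] := pickP (fun _ : A => true); last first.
  by move: sP1; rewrite big_pred0 // => /eqP; rewrite eq_sym oner_eq0.
have sPQ : \sum_a P a = \sum_a Q a by rewrite sP1 sQ1.
have Qbounds a := fmin_fmax_dist1_bounds P Q a sPQ.
set d := dist1 P Q in hd Qbounds *.
set lo := fmin P - d / 2 in Qbounds *; set hi := fmax P + d / 2 in Qbounds *.
have d_ge0 : 0 <= d by apply: sumr_ge0.
have P_gt0 a : 0 < P a by have := fmin_le P a; lra.
have lo_gt0 : 0 < lo by rewrite /lo; lra.
have Q_gt0 a : 0 < Q a by have := Qbounds a; lra.
have hi_gt0 : 0 < hi by have := Qbounds a0; have := Q_gt0 a0; lra.
have rmin_gt0 := fmin_gt0 Rd a0 hRpos.
have rmax_gt0 : 0 < fmax Rd by have := fmax_ge Rd a0; have := hRpos a0; lra.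
have lnQS_bounds a :
    ln (lo / fmax Rd) <= ln (Q a / Rd a) <= ln (hi / fmin Rd).
  have /andP[Qlo Qhi] := Qbounds a.
  by apply/andP; split; apply: ler_ln_div; rewrite ?hRpos ?Q_gt0 ?fmin_le ?fmax_ge.
apply: le_trans (divergence_sub_le P_gt0 Q_gt0 hRpos sPQ) _.
have sD : \sum_a (Q a - P a) = 0 by rewrite sumrB sPQ subrr.
have sabs : \sum_a `|Q a - P a| = d by apply: eq_bigr => a _; rewrite distrC.
rewrite /log2 mulrA ler_pM2r ?invr_gt0 ?ln_gt0 ?ltr1n //.
apply: le_trans (zero_sum_mul_le sD lnQS_bounds) _.
rewrite sabs -ln_div ?posrE ?divr_gt0 //.
have -> : hi / fmin Rd / (lo / fmax Rd) = hi / lo * (fmax Rd / fmin Rd).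
  by field; rewrite !gt_eqF.
exact: lexx.
Qed.
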